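(* The following decision problem is undecidable: given a transition system $T=(V,\mathit{Init},\mathit{TR})$ and a safety property $P$, all expressed in QFLIA, decide whether there exists an inductive invariant for $T$ and $P$ that is itself a QFLIA formula over $V$. In other words, there is no algorithm that, on every such input $(T,P)$, correctly answers whether a QFLIA inductive invariant for $T$ and $P$ exists.
   Context: QFLIA (quantifier-free linear integer arithmetic) formulas are built from integer-valued variables, integer constants, addition, multiplication by integer constants, the relations $=,<,\le$, and Boolean connectives, with no quantifiers; all variables range over $\mathbb{Z}$. A transition system is a tuple $T=(V,\mathit{Init},\mathit{TR})$ where $V$ is a finite set of integer variables, $\mathit{Init}$ is a QFLIA formula over $V$, and $\mathit{TR}$ is a QFLIA formula over $V\uplus V'$, where $V'=\{v' : v\in V\}$ is a primed copy of $V$. A state is an assignment $V\to\mathbb{Z}$. The initial states are those satisfying $\mathit{Init}$. A pair of states $(s,t)$ is a transition if $\mathit{TR}$ holds when unprimed variables take their values from $s$ and primed variables from $t$. Reachable states are those reachable from an initial state by finitely many transitions. A safety property is a QFLIA formula $P$ over $V$. We write $T\models P$ if every reachable state satisfies $P$. An inductive invariant for $T$ and $P$ is a formula $I$ over $V$ such that: (i) $\mathit{Init}\to I$ is valid; (ii) $I\wedge \mathit{TR}\to I'$ is valid, where $I'$ is obtained from $I$ by replacing each $v\in V$ with $v'$; and (iii) $I\to P$ is valid. *)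

From Stdlib Require Import ZArith List Arith.
Import ListNotations.
Open Scope Z_scope.

Inductive term : Type :=
| TVar (v : nat)
| TConst (c : Z)
| TAdd (a b : term)
| TMul (c : Z) (a : term).

Inductive formula : Type :=
| FEq (a b : term)
| FLt (a b : term)
| FLe (a b : term)
| FTrue
| FFalse
| FNot (f : formula)
| FAnd (f g : formula)
| FOr (f g : formula)
| FImp (f g : formula).

Fixpoint teval (rho : nat -> Z) (t : term) : Z :=
  match t with
  | TVar v => rho v
  | TConst c => c
  | TAdd a b => teval rho a + teval rho b
  | TMul c a => c * teval rho a
  end.

Fixpoint sat (rho : nat -> Z) (f : formula) : Prop :=
  match f with
  | FEq a b => teval rho a = teval rho b
  | FLt a b => teval rho a < teval rho b
  | FLe a b => teval rho a <= teval rho b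
  | FTrue => True
  | FFalse => False
  | FNot g => ~ sat rho g
  | FAnd g h => sat rho g /\ sat rho h
  | FOr g h => sat rho g \/ sat rho h
  | FImp g h => sat rho g -> sat rho h
  end.

Fixpoint term_over (k : nat) (t : term) : Prop :=
  match t with
  | TVar v => (v < k)%nat
  | TConst _ => True
  | TAdd a b => term_over k a /\ term_over k b
  | TMul _ a => term_over k a
  end.

Fixpoint formula_over (k : nat) (f : formula) : Prop :=
  match f with
  | FEq a b | FLt a b | FLe a b => term_over k a /\ term_over k b
  | FTrue | FFalse => True
  | FNot g => formula_over k g
  | FAnd g h | FOr g h | FImp g h => formula_over k g /\ formula_over k h
  end.

(* Priming: with V = {0,...,n-1}, the primed copy v' of v is n + v. *)
Fixpoint prime_term (n : nat) (t : term) : term :=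
  match t with
  | TVar v => TVar (n + v)
  | TConst c => TConst c
  | TAdd a b => TAdd (prime_term n a) (prime_term n b)
  | TMul c a => TMul c (prime_term n a)
  end.

Fixpoint prime_formula (n : nat) (f : formula) : formula :=
  match f with
  | FEq a b => FEq (prime_term n a) (prime_term n b)
  | FLt a b => FLt (prime_term n a) (prime_term n b)
  | FLe a b => FLe (prime_term n a) (prime_term n b)
  | FTrue => FTrue
  | FFalse => FFalse
  | FNot g => FNot (prime_formula n g)
  | FAnd g h => FAnd (prime_formula n g) (prime_formula n h)
  | FOr g h => FOr (prime_formula n g) (prime_formula n h)
  | FImp g h => FImp (prime_formula n g) (prime_formula n h)
  end.

Definition valid (f : formula) : Prop := forall rho : nat -> Z, sat rho f.

(* Transition system with variables V = {0,...,nv-1}, primed copy {nv,...,2nv-1}. *)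
Record TS : Type := mkTS { nv : nat; Init : formula; TR : formula }.

Definition ts_wf (T : TS) : Prop :=
  formula_over (nv T) (Init T) /\ formula_over (2 * nv T) (TR T).

Definition inductive_invariant (T : TS) (P I : formula) : Prop :=
  formula_over (nv T) I /\
  valid (FImp (Init T) I) /\
  valid (FImp (FAnd I (TR T)) (prime_formula (nv T) I)) /\
  valid (FImp I P).

Definition input_wf (T : TS) (P : formula) : Prop :=
  ts_wf T /\ formula_over (nv T) P.

Definition has_QFLIA_invariant (T : TS) (P : formula) : Prop :=
  exists I : formula, inductive_invariant T P I.

Definition npair (a b : nat) : nat := ((a + b) * (a + b + 1)) / 2 + b.

Definition encZ (z : Z) : nat :=
  if (0 <=? z)%Z then (2 * Z.to_nat z)%nat else (2 * Z.to_nat (- z) - 1)%nat.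

Fixpoint enc_term (t : term) : nat :=
  match t with
  | TVar v => npair 0 v
  | TConst c => npair 1 (encZ c)
  | TAdd a b => npair 2 (npair (enc_term a) (enc_term b))
  | TMul c a => npair 3 (npair (encZ c) (enc_term a))
  end.

Fixpoint enc_formula (f : formula) : nat :=
  match f with
  | FEq a b => npair 0 (npair (enc_term a) (enc_term b))
  | FLt a b => npair 1 (npair (enc_term a) (enc_term b))
  | FLe a b => npair 2 (npair (enc_term a) (enc_term b))
  | FTrue => npair 3 0
  | FFalse => npair 4 0
  | FNot g => npair 5 (enc_formula g)
  | FAnd g h => npair 6 (npair (enc_formula g) (enc_formula h))
  | FOr g h => npair 7 (npair (enc_formula g) (enc_formula h))
  | FImp g h => npair 8 (npair (enc_formula g) (enc_formula h))
  end.

Definition enc_input (T : TS) (P : formula) : nat :=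
  npair (nv T) (npair (enc_formula (Init T)) (npair (enc_formula (TR T)) (enc_formula P))).

Inductive recf : Type :=
| RZero
| RSucc
| RProj (i : nat)
| RComp (f : recf) (gs : list recf)
| RPrimRec (f g : recf)
| RMu (f : recf).

(* Big-step semantics: reval f args y  means  f(args) converges with value y. *)
Inductive reval : recf -> list nat -> nat -> Prop :=
| ev_zero : forall args, reval RZero args 0
| ev_succ : forall x args, reval RSucc (x :: args) (S x)
| ev_proj : forall i args, reval (RProj i) args (nth i args 0%nat)
| ev_comp : forall f gs args ys y,
    reval_list gs args ys -> reval f ys y -> reval (RComp f gs) args y
| ev_prim0 : forall f g args y,
    reval f args y -> reval (RPrimRec f g) (0%nat :: args) y
| ev_primS : forall f g k args r y,
    reval (RPrimRec f g) (k :: args) r ->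
    reval g (k :: r :: args) y ->
    reval (RPrimRec f g) (S k :: args) y
| ev_mu : forall f args y,
    reval f (y :: args) 0 ->
    (forall k, (k < y)%nat -> exists m, reval f (k :: args) (S m)) ->
    reval (RMu f) args y
with reval_list : list recf -> list nat -> list nat -> Prop :=
| evl_nil : forall args, reval_list [] args []
| evl_cons : forall g gs args y ys,
    reval g args y -> reval_list gs args ys -> reval_list (g :: gs) args (y :: ys).

Definition decides_invariant_existence (f : recf) : Prop :=
  forall (T : TS) (P : formula), input_wf T P ->
    (has_QFLIA_invariant T P -> reval f [enc_input T P] 1%nat) /\
    (~ has_QFLIA_invariant T P -> reval f [enc_input T P] 0%nat).

(* The argument is a diagonalisation.  Partial recursive functions compile to register
   machines, and a register machine over registers [0 .. n-1] is described by a QFLIA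
   transition system over [n] variables.  Given a purported decider [d], consider the machine
   that runs [d] on the code of its own transition system together with the property "the
   flag register never holds 1", and finally copies the answer into the flag.  If [d] answers
   1, a reachable state violates the property, so no inductive invariant exists.  If [d]
   answers 0, the run halts with the flag unset, and the disjunction of the finitely many
   reachable states is a QFLIA inductive invariant.  Self-reference costs nothing: the code of
   the transition relation sits in an initial register, and the rest of the input is a
   computable function of it. *)

From Pilot Require Import Defs.
From Stdlib Require Import ZArith List Arith Lia.
Import ListNotations.
Open Scope nat_scope.

(** * Register machines *)

Inductive instr :=
| ISet (r : nat) (c : Z)
| ICopy (r x : nat) (c : Z)
| IJz (r a : nat)
| IJmp (a : nat).

Definition state := nat -> Z.

(* Register 0 is the program counter; [ICopy r x c] sets [r] to [x + c]. *)
Definition exec (i : instr) (s : state) : state := fun v =>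
  match i with
  | ISet r c => if v =? 0 then (s 0%nat + 1)%Z else if v =? r then c else s v
  | ICopy r x c => if v =? 0 then (s 0%nat + 1)%Z else if v =? r then (s x + c)%Z else s v
  | IJz r a => if v =? 0 then (if (s r =? 0)%Z then Z.of_nat a else (s 0%nat + 1)%Z) else s v
  | IJmp a => if v =? 0 then Z.of_nat a else s v
  end.

Definition step (prog : list instr) (s t : state) : Prop :=
  exists i ins, s 0 = Z.of_nat i /\ nth_error prog i = Some ins /\ t = exec ins s.

Inductive star (prog : list instr) : state -> state -> Prop :=
| star_refl s : star prog s s
| star_step s t u : step prog s t -> star prog t u -> star prog s u.

Definition final (prog : list instr) (s : state) : Prop := forall t, ~ step prog s t.

Ltac simpl_exec :=
  unfold exec; simpl length;
  repeat match goal with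
         | |- context [Nat.eqb ?a ?b] => destruct (Nat.eqb_spec a b)
         | |- context [Z.eqb ?a ?b] => destruct (Z.eqb_spec a b)
         end; try lia.

Lemma star_trans prog a b c : star prog a b -> star prog b c -> star prog a c.
Proof. induction 1; intros; [assumption | eapply star_step; eauto]. Qed.

Lemma star_exec prog p ins s u :
  nth_error prog p = Some ins -> s 0 = Z.of_nat p ->
  star prog (exec ins s) u -> star prog s u.
Proof. intros Hp Hs; apply star_step; exists p, ins; auto. Qed.

Lemma star_exec1 prog p ins s :
  nth_error prog p = Some ins -> s 0 = Z.of_nat p -> star prog s (exec ins s).
Proof. intros Hp Hs; eapply star_exec; eauto using star_refl. Qed.

Lemma step_deterministic prog s a b : step prog s a -> step prog s b -> a = b.
Proof.
  intros [i [ins [Hi [Hins ->]]]] [i' [ins' [Hi' [Hins' ->]]]].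
  rewrite Hi in Hi'; apply Nat2Z.inj in Hi'; subst; congruence.
Qed.

Lemma final_at_end prog s : s 0 = Z.of_nat (length prog) -> final prog s.
Proof.
  intros Hs u [i [ins [Hi [Hins _]]]].
  rewrite Hs in Hi; apply Nat2Z.inj in Hi; subst.
  now rewrite (proj2 (nth_error_None prog (length prog))) in Hins.
Qed.

Lemma star_to_final prog s b sf :
  star prog s b -> star prog s sf -> final prog sf -> star prog b sf.
Proof.
  induction 1 as [|s t u Hst _ IH]; intros Hsf Hfin; auto.
  inversion Hsf as [|? t' ? Hst' Ht']; subst.
  - exfalso; eapply Hfin; eauto.
  - apply IH; auto; now rewrite (step_deterministic _ _ _ _ Hst Hst').
Qed.

Lemma reachable_finite prog s sf :
  star prog s sf -> final prog sf ->
  exists L, forall t, star prog s t <-> In t L.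
Proof.
  induction 1 as [s|s t u Hst _ IH]; intros Hfin.
  - exists [s]; intros t; split.
    + inversion 1; subst; [now left | exfalso; eapply Hfin; eauto].
    + intros [<-|[]]; apply star_refl.
  - destruct (IH Hfin) as [L HL]; exists (s :: L); intros t0; split.
    + inversion 1 as [|? t1 ? Hst1 Ht1]; subst; [now left|].
      right; apply HL; now rewrite (step_deterministic _ _ _ _ Hst Hst1).
    + intros [<-|Hin]; [apply star_refl | eapply star_step; eauto; now apply HL].
Qed.

(** * Compiling partial recursive functions to register machines *)

Fixpoint compile_list (cf : recf -> list nat -> nat -> nat -> nat -> list instr)
  (gs : list recf) (args : list nat) (t base p : nat) : list instr :=
  match gs with
  | [] => []
  | g :: gs' => let c := cf g args t base p in c ++ compile_list cf gs' args (S t) base (p + length c)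
  end.

(* [compile f args out base p] is code to be loaded at address [p]; it stores in register [out]
   the value of [f] on the contents of the registers [args], using the registers [>= base] as
   scratch space.  Primitive recursion keeps its counter in [base], the accumulator in
   [base + 1], the remaining number of iterations in [base + 2] and the step result in
   [base + 3]. *)
Fixpoint compile (f : recf) (args : list nat) (out base p : nat) : list instr :=
  match f with
  | RZero => [ISet out 0]
  | RSucc => match args with a :: _ => [ICopy out a 1] | [] => [ISet out 0] end
  | RProj i => match nth_error args i with Some a => [ICopy out a 0] | None => [ISet out 0] end
  | RComp f0 gs =>
      let cl := compile_list compile gs args base (base + length gs) p in
      cl ++ compile f0 (seq base (length gs)) out (base + length gs) (p + length cl)
  | RPrimRec f0 g0 =>
      match args with
      | [] => [ISet out 0]
      | k :: rest =>
          let cf := compile f0 rest (S base) (base + 4) (p + 2) in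
          let loop := p + 2 + length cf in
          let cg := compile g0 (base :: S base :: rest) (base + 3) (base + 4) (S loop) in
          ISet base 0 :: ICopy (base + 2) k 0 :: cf ++
          IJz (base + 2) (S loop + length cg + 4) :: cg ++
          [ICopy (S base) (base + 3) 0; ICopy base base 1; ICopy (base + 2) (base + 2) (-1);
           IJmp loop; ICopy out (S base) 0]
      end
  | RMu f0 =>
      let cf := compile f0 (base :: args) (S base) (base + 2) (S p) in
      ISet base 0 :: cf ++
      [IJz (S base) (S p + length cf + 3); ICopy base base 1; IJmp (S p); ICopy out base 0]
  end.

Definition code_at (prog : list instr) (p : nat) (code : list instr) : Prop :=
  forall j ins, nth_error code j = Some ins -> nth_error prog (p + j) = Some ins.

Lemma code_at_app prog p a b :
  code_at prog p (a ++ b) -> code_at prog p a /\ code_at prog (p + length a) b.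
Proof.
  intros H; split; intros j ins Hj.
  - apply H; rewrite nth_error_app1; auto; apply nth_error_Some; congruence.
  - replace (p + length a + j) with (p + (length a + j)) by lia; apply H.
    rewrite nth_error_app2 by lia; now replace (length a + j - length a) with j by lia.
Qed.

Lemma code_at_cons prog p i l :
  code_at prog p (i :: l) -> nth_error prog p = Some i /\ code_at prog (S p) l.
Proof.
  intros H; split.
  - rewrite <- (Nat.add_0_r p); now apply H.
  - intros j ins Hj; replace (S p + j) with (p + S j) by lia; now apply H.
Qed.

Lemma code_at_prefix l1 l2 : code_at (l1 ++ l2) 0 l1.
Proof. intros j ins Hj; simpl; rewrite nth_error_app1; auto; apply nth_error_Some; congruence. Qed.

Definition regs_hold (s : state) (rs vs : list nat) : Prop := map s rs = map Z.of_nat vs.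

Lemma regs_hold_frame s t rs vs :
  regs_hold s rs vs -> (forall r, In r rs -> t r = s r) -> regs_hold t rs vs.
Proof. unfold regs_hold; intros <- H; apply map_ext_in; auto. Qed.

Definition compiles_correctly (f : recf) : Prop :=
  forall vals y, reval f vals y ->
  forall prog args out base p s,
    code_at prog p (compile f args out base p) ->
    Forall (fun r => 1 <= r < base) args -> 1 <= out < base ->
    s 0 = Z.of_nat p -> regs_hold s args vals ->
    exists t, star prog s t /\ t 0 = Z.of_nat (p + length (compile f args out base p)) /\
      t out = Z.of_nat y /\ (forall v, v <> 0 -> v <> out -> v < base -> t v = s v).

Definition recf_nested_ind (P : recf -> Prop) (HZ : P RZero) (HS : P RSucc)
  (HP : forall i, P (RProj i)) (HC : forall f gs, P f -> Forall P gs -> P (RComp f gs))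
  (HR : forall f g, P f -> P g -> P (RPrimRec f g)) (HM : forall f, P f -> P (RMu f)) :
  forall f, P f :=
  fix go f := match f with
  | RZero => HZ | RSucc => HS | RProj i => HP i
  | RComp f gs => HC f gs (go f) ((fix go_list l := match l return Forall P l with
       | [] => Forall_nil P | g :: l' => Forall_cons g (go g) (go_list l') end) gs)
  | RPrimRec f g => HR f g (go f) (go g)
  | RMu f => HM f (go f) end.

Lemma compile_zero_correct : compiles_correctly RZero.
Proof.
  intros vals y H prog args out base p s Hc Ha Ho Hs Hr; inversion H; subst; simpl in *.
  apply code_at_cons in Hc as [Hc _].
  exists (exec (ISet out 0) s); repeat split; [eapply star_exec1; eauto | simpl_exec ..].
  intros; simpl_exec.
Qed.

Lemma compile_succ_correct : compiles_correctly RSucc.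
Proof.
  intros vals y H prog args out base p s Hc Ha Ho Hs Hr; inversion H; subst.
  destruct args as [|a args']; [discriminate|]; simpl in *.
  injection Hr as Ha0 _; apply code_at_cons in Hc as [Hc _].
  exists (exec (ICopy out a 1) s); repeat split; [eapply star_exec1; eauto | simpl_exec ..].
  intros; simpl_exec.
Qed.

Lemma compile_proj_correct i : compiles_correctly (RProj i).
Proof.
  intros vals y H prog args out base p s Hc Ha Ho Hs Hr; inversion H; subst; simpl in *.
  apply (f_equal (fun l => nth_error l i)) in Hr; rewrite !nth_error_map in Hr.
  destruct (nth_error args i) as [a|] eqn:E; apply code_at_cons in Hc as [Hc _].
  - destruct (nth_error vals i) eqn:E2; simpl in Hr; [|discriminate].
    injection Hr as Hv; rewrite (nth_error_nth _ _ _ E2).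
    exists (exec (ICopy out a 0) s); repeat split; [eapply star_exec1; eauto | simpl_exec ..].
    intros; simpl_exec.
  - destruct (nth_error vals i) eqn:E2; simpl in Hr; [discriminate|].
    rewrite nth_error_None in E2; rewrite nth_overflow by lia.
    exists (exec (ISet out 0) s); repeat split; [eapply star_exec1; eauto | simpl_exec ..].
    intros; simpl_exec.
Qed.

Lemma compile_list_correct gs vals ys :
  reval_list gs vals ys -> Forall compiles_correctly gs ->
  forall prog args t b p s,
    code_at prog p (compile_list compile gs args t b p) ->
    Forall (fun r => 1 <= r < t) args -> 1 <= t -> t + length gs <= b ->
    s 0 = Z.of_nat p -> regs_hold s args vals ->
    exists u, star prog s u /\ u 0 = Z.of_nat (p + length (compile_list compile gs args t b p)) /\
      regs_hold u (seq t (length gs)) ys /\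
      (forall v, v <> 0 -> v < b -> (v < t \/ t + length gs <= v) -> u v = s v).
Proof.
  induction 1 as [vals|g gs vals y ys Hg _ IH]; intros HF prog args t b p s Hc Ha Ht Hb Hs Hr.
  - exists s; repeat split; auto using star_refl; rewrite Hs; f_equal; simpl; lia.
  - inversion HF as [|? ? Hgc HFs]; subst; simpl in Hc, Hb; apply code_at_app in Hc as [Hc1 Hc2].
    assert (Ha' : forall t', t <= t' -> Forall (fun r => 1 <= r < t') args)
      by (intros t' Htt; eapply Forall_impl; [|exact Ha]; simpl; intros; lia).
    destruct (Hgc _ _ Hg prog args t b p s Hc1) as [u1 [S1 [P1 [O1 F1]]]];
      auto; try (apply Ha'; simpl; lia); try lia.
    destruct (IH HFs prog args (S t) b _ u1 Hc2) as [u2 [S2 [P2 [O2 F2]]]];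
      auto; try (apply Ha'; simpl; lia); try lia.
    { eapply regs_hold_frame; eauto; intros r Hin.
      rewrite Forall_forall in Ha; specialize (Ha r Hin); apply F1; lia. }
    exists u2; repeat split.
    + eapply star_trans; eauto.
    + rewrite P2; simpl; rewrite length_app; f_equal; lia.
    + unfold regs_hold in *; simpl; rewrite O2, F2 by lia; now f_equal.
    + intros; simpl in *; rewrite F2 by lia; apply F1; lia.
Qed.

Lemma Forall_seq_bounds a m : 1 <= a -> Forall (fun r => 1 <= r < a + m) (seq a m).
Proof. intros; rewrite Forall_forall; intros r Hr; apply in_seq in Hr; lia. Qed.

Lemma compile_comp_correct f gs :
  compiles_correctly f -> Forall compiles_correctly gs -> compiles_correctly (RComp f gs).
Proof.
  intros Hf Hgs vals y H prog args out base p s Hc Ha Ho Hs Hr.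
  inversion H as [| | |? ? ? ys ? HL Hf0 | | |]; subst; simpl in Hc |- *.
  apply code_at_app in Hc as [Hc1 Hc2].
  destruct (compile_list_correct _ _ _ HL Hgs prog args base (base + length gs) p s Hc1)
    as [u1 [S1 [P1 [O1 F1]]]]; auto; try lia.
  edestruct (Hf _ _ Hf0 prog _ out _ _ u1 Hc2) as [u2 [S2 [P2 [O2 F2]]]];
    auto; try (apply Forall_seq_bounds; lia); try lia.
  exists u2; repeat split; auto.
  - eapply star_trans; eauto.
  - rewrite P2, length_app; f_equal; lia.
  - intros; rewrite F2 by lia; apply F1; lia.
Qed.

Section MuSearch.

Variables (f : recf) (prog : list instr) (args vals : list nat) (base p : nat) (s : state).
Hypothesis Hf : compiles_correctly f.
Let cf := compile f (base :: args) (S base) (base + 2) (S p).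
Hypotheses (Hset : nth_error prog p = Some (ISet base 0)) (Hcf : code_at prog (S p) cf)
  (Hjz : nth_error prog (S p + length cf) = Some (IJz (S base) (S p + length cf + 3)))
  (Hinc : nth_error prog (S (S p + length cf)) = Some (ICopy base base 1))
  (Hjmp : nth_error prog (S (S (S p + length cf))) = Some (IJmp (S p))).
Hypotheses (Hbase : 1 <= base) (Hargs : Forall (fun r => 1 <= r < base) args) (Hs : s 0 = Z.of_nat p)
  (Hr : regs_hold s args vals).

Lemma mu_body_correct j m u :
  reval f (j :: vals) m -> u 0 = Z.of_nat (S p) -> u base = Z.of_nat j ->
  (forall v, v <> 0 -> v < base -> u v = s v) ->
  exists t, star prog u t /\ t 0 = Z.of_nat (S p + length cf) /\ t (S base) = Z.of_nat m /\
    (forall v, v <> 0 -> v < base -> t v = s v) /\ t base = Z.of_nat j.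
Proof.
  intros Hm Hu0 Hub Hframe.
  destruct (Hf _ _ Hm prog (base :: args) (S base) (base + 2) (S p) u Hcf)
    as [t [St [Pt [Ot Ft]]]]; auto; try lia.
  - constructor; [lia|]; eapply Forall_impl; [|exact Hargs]; simpl; intros; lia.
  - unfold regs_hold in *; simpl; rewrite Hub, <- Hr; f_equal; apply map_ext_in.
    intros r Hin; rewrite Forall_forall in Hargs; specialize (Hargs r Hin); apply Hframe; lia.
  - exists t; repeat split; auto.
    + intros; rewrite Ft by lia; auto.
    + rewrite Ft by lia; auto.
Qed.

Lemma mu_loop j :
  (forall k, k < j -> exists m, reval f (k :: vals) (S m)) ->
  exists u, star prog s u /\ u 0 = Z.of_nat (S p) /\ u base = Z.of_nat j /\
    (forall v, v <> 0 -> v < base -> u v = s v).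
Proof.
  induction j as [|j IH]; intros Hlt.
  - exists (exec (ISet base 0) s); repeat split; [eapply star_exec1; eauto | simpl_exec ..].
    intros; simpl_exec.
  - destruct IH as [u [Su [Pu [Ku Fu]]]]; [intros; apply Hlt; lia|].
    destruct (Hlt j) as [m Hm]; [lia|].
    destruct (mu_body_correct _ _ _ Hm Pu Ku Fu) as [t [St [Pt [Ot [Ft Kt]]]]].
    exists (exec (IJmp (S p)) (exec (ICopy base base 1)
             (exec (IJz (S base) (S p + length cf + 3)) t))); repeat split.
    + apply (star_trans _ _ _ _ Su), (star_trans _ _ _ _ St).
      eapply star_exec; [exact Hjz | exact Pt |].
      eapply star_exec; [exact Hinc | simpl_exec |].
      eapply star_exec1; [exact Hjmp | simpl_exec].
    + simpl_exec.
    + intros v Hv0 Hv; simpl_exec; apply Ft; lia.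
Qed.

Lemma mu_search y :
  reval f (y :: vals) 0 -> (forall k, k < y -> exists m, reval f (k :: vals) (S m)) ->
  exists t, star prog s t /\ t 0 = Z.of_nat (S p + length cf + 3) /\ t base = Z.of_nat y /\
    (forall v, v <> 0 -> v < base -> t v = s v).
Proof.
  intros Hy Hlt.
  destruct (mu_loop y Hlt) as [u [Su [Pu [Ku Fu]]]].
  destruct (mu_body_correct _ _ _ Hy Pu Ku Fu) as [t [St [Pt [Ot [Ft Kt]]]]].
  exists (exec (IJz (S base) (S p + length cf + 3)) t); repeat split.
  - apply (star_trans _ _ _ _ Su), (star_trans _ _ _ _ St).
    eapply star_exec1; [exact Hjz | exact Pt].
  - simpl_exec.
  - simpl_exec.
  - intros v Hv0 Hv; simpl_exec; apply Ft; lia.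
Qed.

End MuSearch.

Lemma compile_mu_correct f : compiles_correctly f -> compiles_correctly (RMu f).
Proof.
  intros Hf vals y H prog args out base p s Hc Ha Ho Hs Hr.
  inversion H as [| | | | | | ? ? ? Hy Hlt]; subst; simpl in Hc |- *.
  set (cf := compile f (base :: args) (S base) (base + 2) (S p)) in *.
  apply code_at_cons in Hc as [Hset Hc]; apply code_at_app in Hc as [Hcf Hc].
  apply code_at_cons in Hc as [Hjz Hc]; apply code_at_cons in Hc as [Hinc Hc].
  apply code_at_cons in Hc as [Hjmp Hc]; apply code_at_cons in Hc as [Hout _].
  destruct (mu_search f prog args vals base p s Hf Hset Hcf Hjz Hinc Hjmp ltac:(lia) Ha Hs Hr y Hy Hlt)
    as [t [St [Pt [Kt Ft]]]]; fold cf in Pt.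
  exists (exec (ICopy out base 0) t); split; [|split; [|split]].
  - eapply star_trans; [exact St|]; eapply star_exec1; [exact Hout | simpl_exec].
  - rewrite length_app; simpl_exec.
  - simpl_exec.
  - intros v Hv0 Hvo Hv; simpl_exec; apply Ft; lia.
Qed.

Section PrimRecLoop.

Variables (f g : recf) (prog : list instr) (k : nat) (rest vals : list nat) (K base p : nat)
  (s : state).
Hypotheses (Hf : compiles_correctly f) (Hg : compiles_correctly g).
Let cf := compile f rest (S base) (base + 4) (p + 2).
Let loop := p + 2 + length cf.
Let cg := compile g (base :: S base :: rest) (base + 3) (base + 4) (S loop).
Hypotheses (Hset : nth_error prog p = Some (ISet base 0))
  (Hcount : nth_error prog (S p) = Some (ICopy (base + 2) k 0))
  (Hcf : code_at prog (p + 2) cf)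
  (Hjz : nth_error prog loop = Some (IJz (base + 2) (S loop + length cg + 4)))
  (Hcg : code_at prog (S loop) cg)
  (Hacc : nth_error prog (S loop + length cg) = Some (ICopy (S base) (base + 3) 0))
  (Hinc : nth_error prog (S (S loop + length cg)) = Some (ICopy base base 1))
  (Hdec : nth_error prog (S (S (S loop + length cg))) = Some (ICopy (base + 2) (base + 2) (-1)))
  (Hjmp : nth_error prog (S (S (S (S loop + length cg)))) = Some (IJmp loop)).
Hypotheses (Hk : 1 <= k < base) (Hrest : Forall (fun r => 1 <= r < base) rest)
  (Hs : s 0 = Z.of_nat p) (HK : s k = Z.of_nat K) (Hr : regs_hold s rest vals).

Let at_loop j r u :=
  star prog s u /\ u 0 = Z.of_nat loop /\ u base = Z.of_nat j /\ u (S base) = Z.of_nat r /\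
  u (base + 2) = Z.of_nat (K - j) /\ (forall v, v <> 0 -> v < base -> u v = s v).

Lemma regs_hold_rest u : (forall v, v <> 0 -> v < base -> u v = s v) -> regs_hold u rest vals.
Proof.
  intros Hu; apply (regs_hold_frame s); auto; intros r Hin.
  rewrite Forall_forall in Hrest; specialize (Hrest r Hin); apply Hu; lia.
Qed.

Lemma primrec_loop_start r : reval f vals r -> exists u, at_loop 0 r u.
Proof.
  intros Hfr.
  set (s2 := exec (ICopy (base + 2) k 0) (exec (ISet base 0) s)).
  destruct (Hf _ _ Hfr prog rest (S base) (base + 4) (p + 2) s2 Hcf) as [u [Su [Pu [Ou Fu]]]].
  - eapply Forall_impl; [|exact Hrest]; simpl; intros; lia.
  - lia.
  - subst s2; simpl_exec.
  - apply regs_hold_rest; intros v Hv0 Hv; subst s2; simpl_exec.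
  - exists u; split; [|split; [|split; [|split; [|split]]]]; auto.
    + eapply star_exec; [exact Hset | exact Hs |].
      eapply star_exec; [exact Hcount | simpl_exec | exact Su].
    + rewrite Fu by lia; subst s2; simpl_exec.
    + rewrite Fu by lia; subst s2; simpl_exec.
    + intros v Hv0 Hv; rewrite Fu by lia; subst s2; simpl_exec.
Qed.

Lemma primrec_loop_next j r r' u :
  at_loop j r u -> j < K -> reval g (j :: r :: vals) r' -> exists u', at_loop (S j) r' u'.
Proof.
  intros [Su [Pu [Ju [Ru [Du Fu]]]]] HjK Hgr.
  set (u1 := exec (IJz (base + 2) (S loop + length cg + 4)) u).
  destruct (Hg _ _ Hgr prog (base :: S base :: rest) (base + 3) (base + 4) (S loop) u1 Hcg)
    as [u2 [Su2 [Pu2 [Ou2 Fu2]]]].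
  - constructor; [lia|]; constructor; [lia|].
    eapply Forall_impl; [|exact Hrest]; simpl; intros; lia.
  - lia.
  - subst u1; simpl_exec.
  - unfold regs_hold; simpl; f_equal; [subst u1; simpl_exec|]; f_equal; [subst u1; simpl_exec|].
    apply regs_hold_rest; intros v Hv0 Hv; subst u1; simpl_exec; apply Fu; lia.
  - fold cg in Pu2.
    exists (exec (IJmp loop) (exec (ICopy (base + 2) (base + 2) (-1))
             (exec (ICopy base base 1) (exec (ICopy (S base) (base + 3) 0) u2)))).
    split; [|split; [|split; [|split; [|split]]]].
    + apply (star_trans _ _ _ _ Su).
      eapply star_exec; [exact Hjz | exact Pu |].
      apply (star_trans _ _ _ _ Su2).
      eapply star_exec; [exact Hacc | rewrite Pu2; f_equal; lia |].
      eapply star_exec; [exact Hinc | simpl_exec |].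
      eapply star_exec; [exact Hdec | simpl_exec |].
      eapply star_exec1; [exact Hjmp | simpl_exec].
    + simpl_exec.
    + simpl_exec; rewrite Fu2 by lia; subst u1; simpl_exec.
    + simpl_exec.
    + simpl_exec; rewrite Fu2 by lia; subst u1; simpl_exec.
    + intros v Hv0 Hv; simpl_exec; rewrite Fu2 by lia; subst u1; simpl_exec; apply Fu; lia.
Qed.

Lemma primrec_loop j r :
  j <= K -> reval (RPrimRec f g) (j :: vals) r -> exists u, at_loop j r u.
Proof.
  revert r; induction j as [|j IH]; intros r Hj Hev; inversion Hev; subst.
  - now apply primrec_loop_start.
  - match goal with H : reval (RPrimRec f g) (j :: vals) ?r0 |- _ =>
      destruct (IH r0 ltac:(lia) H) as [u Hu] end.
    eapply primrec_loop_next; eauto; lia.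
Qed.

End PrimRecLoop.

Lemma compile_primrec_correct f g :
  compiles_correctly f -> compiles_correctly g -> compiles_correctly (RPrimRec f g).
Proof.
  intros Hf Hg vals y H prog args out base p s Hc Ha Ho Hs Hr.
  destruct vals as [|K rest]; [inversion H|].
  destruct args as [|k ks]; [discriminate Hr|].
  unfold regs_hold in Hr; simpl in Hr; injection Hr as HK Hr.
  inversion Ha as [|? ? Hk Hks]; subst; simpl in Hc |- *.
  set (cf := compile f ks (S base) (base + 4) (p + 2)) in *.
  set (cg := compile g (base :: S base :: ks) (base + 3) (base + 4) (S (p + 2 + length cf))) in *.
  apply code_at_cons in Hc as [Hset Hc]; apply code_at_cons in Hc as [Hcount Hc].
  replace (S (S p)) with (p + 2) in Hc by lia.
  apply code_at_app in Hc as [Hcf Hc]; apply code_at_cons in Hc as [Hjz Hc].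
  apply code_at_app in Hc as [Hcg Hc].
  apply code_at_cons in Hc as [Hacc Hc]; apply code_at_cons in Hc as [Hinc Hc].
  apply code_at_cons in Hc as [Hdec Hc]; apply code_at_cons in Hc as [Hjmp Hc].
  apply code_at_cons in Hc as [Hout _].
  destruct (primrec_loop f g prog k ks rest K base p s Hf Hg Hset Hcount Hcf Hjz Hcg
              Hacc Hinc Hdec Hjmp ltac:(lia) Hks Hs HK Hr K y (le_n _) H)
    as [u [Su [Pu [Ju [Ru [Du Fu]]]]]].
  exists (exec (ICopy out (S base) 0) (exec (IJz (base + 2) (S (p + 2 + length cf) + length cg + 4)) u)).
  split; [|split; [|split]].
  - apply (star_trans _ _ _ _ Su).
    eapply star_exec; [exact Hjz | exact Pu |].
    eapply star_exec1; [exact Hout | simpl_exec].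
  - simpl_exec; rewrite !length_app; simpl length; rewrite length_app; simpl length; lia.
  - simpl_exec.
  - intros v Hv0 Hvo Hv; simpl_exec; apply Fu; lia.
Qed.

Lemma compile_correct f : compiles_correctly f.
Proof.
  induction f using recf_nested_ind.
  - exact compile_zero_correct.
  - exact compile_succ_correct.
  - exact (compile_proj_correct i).
  - now apply compile_comp_correct.
  - now apply compile_primrec_correct.
  - now apply compile_mu_correct.
Qed.

Definition writes_above (lo : nat) (ins : instr) : Prop :=
  match ins with ISet r _ | ICopy r _ _ => lo <= r | _ => True end.

Lemma compile_writes_above lo f : forall args out base p,
  lo <= out -> lo <= base -> Forall (writes_above lo) (compile f args out base p).
Proof.
  induction f as [| |i|f gs IHf IHgs|f g IHf IHg|f IHf] using recf_nested_ind;
    intros args out base p Hout Hbase; simpl.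
  - repeat constructor; simpl; lia.
  - destruct args; repeat constructor; simpl; lia.
  - destruct (nth_error args i); repeat constructor; simpl; lia.
  - apply Forall_app; split; [|apply IHf; lia].
    assert (Hb : lo <= base + length gs) by lia; revert Hb.
    generalize (base + length gs) as b; intros b Hb; revert base p Hbase.
    induction IHgs as [|g gs' Hg _ IH]; intros t p Ht; simpl; [constructor|].
    apply Forall_app; split; [apply Hg; lia | apply IH; lia].
  - destruct args; [repeat constructor; simpl; lia|].
    repeat (apply Forall_cons; [simpl; lia|]).
    apply Forall_app; split; [apply IHf; lia|].
    apply Forall_cons; [exact I|]; apply Forall_app; split; [apply IHg; lia|].
    repeat constructor; simpl; lia.
  - apply Forall_cons; [simpl; lia|]; apply Forall_app; split; [apply IHf; lia|].
    repeat constructor; simpl; lia.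
Qed.

(** * The transition relation of a register machine *)

Definition max_reg (ins : instr) : nat :=
  match ins with ISet r _ => r | ICopy r x _ => Nat.max r x | IJz r _ => r | IJmp _ => 0 end.

Definition pc_next_formula (n i : nat) (ins : instr) : formula :=
  match ins with
  | ISet _ _ | ICopy _ _ _ => FEq (TVar n) (TConst (Z.of_nat (S i)))
  | IJz r a =>
      FOr (FAnd (FEq (TVar r) (TConst 0)) (FEq (TVar n) (TConst (Z.of_nat a))))
          (FAnd (FNot (FEq (TVar r) (TConst 0))) (FEq (TVar n) (TConst (Z.of_nat (S i)))))
  | IJmp a => FEq (TVar n) (TConst (Z.of_nat a))
  end.

Definition reg_next_term (ins : instr) (v : nat) : term :=
  match ins with
  | ISet r c => if v =? r then TConst c else TVar v
  | ICopy r x c => if v =? r then TAdd (TVar x) (TConst c) else TVar v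
  | _ => TVar v
  end.

Fixpoint regs_next_formula (n : nat) (ins : instr) (k : nat) : formula :=
  match k with
  | 0 => FTrue
  | S k' => FAnd (FEq (TVar (n + S k')) (reg_next_term ins (S k'))) (regs_next_formula n ins k')
  end.

Definition instr_TR (n i : nat) (ins : instr) : formula :=
  FAnd (FEq (TVar 0) (TConst (Z.of_nat i)))
       (FAnd (pc_next_formula n i ins) (regs_next_formula n ins (pred n))).

Fixpoint program_TR (n : nat) (prog : list instr) (i : nat) : formula :=
  match prog with
  | [] => FFalse
  | ins :: prog' => FOr (instr_TR n i ins) (program_TR n prog' (S i))
  end.

Lemma teval_reg_next_term rho ins v : v <> 0 -> teval rho (reg_next_term ins v) = exec ins rho v.
Proof. intros; destruct ins; simpl; simpl_exec; reflexivity. Qed.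

Lemma regs_next_formula_iff rho n ins k :
  sat rho (regs_next_formula n ins k) <->
  (forall v, 1 <= v <= k -> rho (n + v) = teval rho (reg_next_term ins v)).
Proof.
  induction k as [|k IH]; simpl; [split; auto; intros; lia|].
  rewrite IH; split.
  - intros [H1 H2] v Hv; destruct (Nat.eq_dec v (S k)); subst; auto; apply H2; lia.
  - intros H; split; [apply H; lia | intros; apply H; lia].
Qed.

Lemma pc_next_formula_iff rho n i ins :
  rho 0 = Z.of_nat i -> (sat rho (pc_next_formula n i ins) <-> rho n = exec ins rho 0).
Proof.
  intros H; destruct ins; simpl; unfold exec; simpl; rewrite ?H.
  1, 2: split; intros; lia.
  - destruct (Z.eqb_spec (rho r) 0); intuition lia.
  - tauto.
Qed.

Lemma instr_TR_iff rho n i ins :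
  1 <= n -> rho 0 = Z.of_nat i ->
  (sat rho (instr_TR n i ins) <-> forall v, v < n -> rho (n + v) = exec ins rho v).
Proof.
  intros Hn Hi; unfold instr_TR; simpl.
  rewrite pc_next_formula_iff, regs_next_formula_iff by auto; split.
  - intros [_ [H1 H2]] [|v] Hv; [now rewrite Nat.add_0_r|].
    rewrite H2 by lia; apply teval_reg_next_term; lia.
  - intros H; split; [auto|]; split.
    + rewrite <- (Nat.add_0_r n) at 1; apply H; lia.
    + intros; rewrite H by lia; symmetry; apply teval_reg_next_term; lia.
Qed.

Lemma program_TR_iff rho n prog i :
  sat rho (program_TR n prog i) <->
  exists j ins, nth_error prog j = Some ins /\ sat rho (instr_TR n (i + j) ins).
Proof.
  revert i; induction prog as [|ins0 prog IH]; intros i; simpl.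
  - split; [tauto|]; intros [[|j] [ins [H _]]]; discriminate.
  - rewrite IH; split.
    + intros [H|[j [ins [H1 H2]]]].
      * exists 0, ins0; rewrite Nat.add_0_r; auto.
      * exists (S j), ins; rewrite <- plus_n_Sm; auto.
    + intros [[|j] [ins [H1 H2]]]; simpl in H1.
      * left; injection H1 as <-; now rewrite Nat.add_0_r in H2.
      * right; exists j, ins; rewrite <- plus_n_Sm in H2; auto.
Qed.

Lemma exec_agree n ins a b :
  (forall v, v < n -> a v = b v) -> max_reg ins < n ->
  forall v, v < n -> exec ins a v = exec ins b v.
Proof.
  intros Hab Hm v Hv; destruct ins; simpl in Hm; unfold exec;
    repeat match goal with |- context [Nat.eqb ?a ?b] => destruct (Nat.eqb_spec a b) end;
    rewrite ?Hab by lia; auto.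
Qed.

(* The valuation of [V] and [V'] describing the transition from [t] to [u]. *)
Definition glue (n : nat) (t u : state) : state :=
  fun v => if v <? n then t v else u (v - n).

Lemma glue_unprimed n t u v : v < n -> glue n t u v = t v.
Proof. intros; unfold glue; destruct (Nat.ltb_spec v n); [auto | lia]. Qed.

Lemma glue_primed n t u v : glue n t u (n + v) = u v.
Proof. unfold glue; destruct (Nat.ltb_spec (n + v) n); [lia | f_equal; lia]. Qed.

Section ProgramTR.

Variables (n : nat) (prog : list instr).
Hypotheses (Hn : 1 <= n) (Hregs : forall ins, In ins prog -> max_reg ins < n).

Lemma program_TR_step t u : step prog t u -> sat (glue n t u) (program_TR n prog 0).
Proof.
  intros [i [ins [Hp [Hins ->]]]]; apply program_TR_iff; exists i, ins; split; auto.
  assert (Hm : max_reg ins < n) by (apply Hregs; eapply nth_error_In; eauto).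
  apply instr_TR_iff; auto; [now rewrite glue_unprimed by lia|].
  intros v Hv; rewrite glue_primed.
  apply exec_agree with n; auto; intros; now rewrite glue_unprimed.
Qed.

Lemma program_TR_exec rho :
  sat rho (program_TR n prog 0) ->
  exists j ins, nth_error prog j = Some ins /\ rho 0 = Z.of_nat j /\
    forall v, v < n -> rho (n + v) = exec ins rho v.
Proof.
  intros H; apply program_TR_iff in H as [j [ins [Hj Hc]]].
  assert (H0 : rho 0 = Z.of_nat j) by (destruct Hc; auto).
  exists j, ins; repeat split; auto; eapply instr_TR_iff; eauto.
Qed.

Lemma formula_over_program_TR i : formula_over (2 * n) (program_TR n prog i).
Proof.
  revert i; induction prog as [|ins prog' IH]; intros i; simpl; auto; split.
  - assert (Hm : max_reg ins < n) by (apply Hregs; simpl; auto).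
    unfold instr_TR; simpl; split; [lia|]; split.
    + destruct ins; simpl in *; intuition lia.
    + enough (forall k, k < n -> formula_over (2 * n) (regs_next_formula n ins k)) by (apply H; lia).
      induction k as [|k IHk]; simpl; auto; intros Hk; split; [split; [lia|] | apply IHk; lia].
      destruct ins; cbn [reg_next_term max_reg] in *;
        try destruct (Nat.eqb_spec (S k) r); simpl; intuition lia.
  - apply IH; intros; apply Hregs; simpl; auto.
Qed.

End ProgramTR.

(** * Inductive invariants of register machines *)

Lemma teval_agree k t rho1 rho2 :
  term_over k t -> (forall v, v < k -> rho1 v = rho2 v) -> teval rho1 t = teval rho2 t.
Proof.
  intros Ho Hag; induction t; simpl in *; auto.
  - destruct Ho; f_equal; auto.
  - f_equal; auto.
Qed.

Lemma sat_agree k f rho1 rho2 :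
  formula_over k f -> (forall v, v < k -> rho1 v = rho2 v) -> (sat rho1 f <-> sat rho2 f).
Proof.
  intros Ho Hag; induction f as [a c|a c|a c| | | | | |]; simpl in *; try tauto.
  all: destruct Ho; rewrite (teval_agree k a rho1 rho2), (teval_agree k c rho1 rho2) by auto;
    tauto.
Qed.

Lemma teval_prime_term n rho t : teval rho (prime_term n t) = teval (fun v => rho (n + v)) t.
Proof. induction t; simpl; congruence. Qed.

Lemma sat_prime_formula n rho f :
  sat rho (prime_formula n f) <-> sat (fun v => rho (n + v)) f.
Proof.
  induction f; simpl; rewrite ?teval_prime_term; tauto.
Qed.

Fixpoint state_eq_formula (t : state) (k : nat) : formula :=
  match k with
  | 0 => FTrue
  | S k' => FAnd (FEq (TVar k') (TConst (t k'))) (state_eq_formula t k')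
  end.

Definition states_formula (n : nat) (L : list state) : formula :=
  fold_right (fun t acc => FOr (state_eq_formula t n) acc) FFalse L.

Lemma sat_state_eq_formula rho t k :
  sat rho (state_eq_formula t k) <-> forall v, v < k -> rho v = t v.
Proof.
  induction k as [|k IH]; simpl; [split; auto; intros; lia|].
  rewrite IH; split.
  - intros [H1 H2] v Hv; destruct (Nat.eq_dec v k); subst; auto; apply H2; lia.
  - intros H; split; [apply H | intros; apply H]; lia.
Qed.

Lemma sat_states_formula rho n L :
  sat rho (states_formula n L) <-> exists t, In t L /\ forall v, v < n -> rho v = t v.
Proof.
  induction L as [|t L IH]; simpl; [firstorder|].
  rewrite sat_state_eq_formula, IH; split.
  - intros [H|[t' [H1 H2]]]; eauto.
  - intros [t' [[<-|H1] H2]]; eauto.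
Qed.

Lemma formula_over_states_formula n L : formula_over n (states_formula n L).
Proof.
  induction L as [|t L IH]; simpl; auto; split; auto.
  enough (forall k, k <= n -> formula_over n (state_eq_formula t k)) by auto.
  induction k; simpl; auto; intros; split; [split; simpl; auto; lia | apply IHk; lia].
Qed.

Section MachineTS.

Variables (T : TS) (prog : list instr).
Hypotheses (Hn : 1 <= nv T) (Hregs : forall ins, In ins prog -> max_reg ins < nv T)
  (HTR : TR T = program_TR (nv T) prog 0).

Lemma inductive_invariant_star P I a b :
  inductive_invariant T P I -> star prog a b -> sat a I -> sat b I.
Proof.
  intros [Hover [_ [Hind _]]] Hab; induction Hab as [|s t u Hst _ IH]; auto; intros Hs; apply IH.
  set (rho := glue (nv T) s t).
  assert (Hrho : sat rho (FAnd I (TR T))).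
  { split.
    - rewrite (sat_agree _ _ rho s Hover); auto; intros; now apply glue_unprimed.
    - rewrite HTR; now apply program_TR_step. }
  apply Hind, sat_prime_formula in Hrho.
  rewrite (sat_agree _ _ _ t Hover) in Hrho; auto; intros; apply glue_primed.
Qed.

(* When the run from the unique initial state halts, the finitely many reachable states,
   listed explicitly, form a QFLIA inductive invariant. *)
Lemma halting_run_invariant P s0 sf :
  (forall rho, sat rho (Init T) -> forall v, v < nv T -> rho v = s0 v) ->
  star prog s0 sf -> final prog sf -> formula_over (nv T) P ->
  (forall t, star prog s0 t -> sat t P) -> has_QFLIA_invariant T P.
Proof.
  intros Hinit Hrun Hfinal HP Hsafe.
  destruct (reachable_finite _ _ _ Hrun Hfinal) as [L HL].
  exists (states_formula (nv T) L); split; [|split; [|split]].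
  - apply formula_over_states_formula.
  - intros rho Hrho; apply sat_states_formula; exists s0; split.
    + apply HL, star_refl.
    + now apply Hinit.
  - intros rho [H1 H2]; apply sat_states_formula in H1 as [t [Ht Hag]].
    rewrite HTR in H2; destruct (program_TR_exec _ _ Hn _ H2) as [j [ins [Hj [Hr0 Hex]]]].
    assert (Hm : max_reg ins < nv T) by (apply Hregs; eapply nth_error_In; eauto).
    apply sat_prime_formula, sat_states_formula; exists (exec ins t); split.
    + apply HL; eapply star_trans; [apply HL, Ht|].
      eapply star_exec1; eauto; rewrite <- Hag by lia; auto.
    + intros v Hv; rewrite Hex by auto; apply exec_agree with (nv T); auto; lia.
  - intros rho H; apply sat_states_formula in H as [t [Ht Hag]].
    rewrite (sat_agree _ _ _ t HP Hag); apply Hsafe, HL, Ht.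
Qed.

End MachineTS.

(** * Computing the code of an input *)

Arguments npair : simpl never.

Lemma reval_comp1 f g args x y :
  reval g args x -> reval f [x] y -> reval (RComp f [g]) args y.
Proof. intros; econstructor; [|eauto]; repeat econstructor; eauto. Qed.

Lemma reval_comp2 f g1 g2 args x1 x2 y :
  reval g1 args x1 -> reval g2 args x2 -> reval f [x1; x2] y -> reval (RComp f [g1; g2]) args y.
Proof. intros; econstructor; [|eauto]; repeat econstructor; eauto. Qed.

Lemma reval_proj i args y : nth i args 0 = y -> reval (RProj i) args y.
Proof. intros <-; constructor. Qed.

Fixpoint const_rec (n : nat) : recf :=
  match n with 0 => RZero | S n' => RComp RSucc [const_rec n'] end.

Lemma reval_const_rec n args : reval (const_rec n) args n.
Proof. induction n; simpl; [constructor | eapply reval_comp1; eauto; constructor]. Qed.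

Definition add_rec : recf := RPrimRec (RProj 0) (RComp RSucc [RProj 1]).

Lemma reval_add_rec a b : reval add_rec [a; b] (a + b).
Proof.
  induction a as [|a IH].
  - apply ev_prim0, reval_proj; reflexivity.
  - eapply ev_primS; [apply IH|].
    eapply reval_comp1; [apply reval_proj; reflexivity | constructor].
Qed.

Fixpoint triangle (m : nat) : nat := match m with 0 => 0 | S m' => triangle m' + S m' end.

Lemma triangle_eq m : triangle m = m * (m + 1) / 2.
Proof.
  assert (H : 2 * triangle m = m * (m + 1)) by (induction m; simpl; nia).
  now rewrite <- H, Nat.mul_comm, Nat.div_mul.
Qed.

Definition triangle_rec : recf := RPrimRec RZero (RComp add_rec [RProj 1; RComp RSucc [RProj 0]]).

Lemma reval_triangle_rec m : reval triangle_rec [m] (triangle m).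
Proof.
  induction m as [|m IH]; [apply ev_prim0; constructor|].
  eapply ev_primS; [apply IH|].
  eapply reval_comp2; [apply reval_proj; reflexivity | | apply reval_add_rec].
  eapply reval_comp1; [apply reval_proj; reflexivity | constructor].
Qed.

Definition npair_rec : recf :=
  RComp add_rec [RComp triangle_rec [RComp add_rec [RProj 0; RProj 1]]; RProj 1].

Lemma reval_npair_rec a b : reval npair_rec [a; b] (npair a b).
Proof.
  unfold npair; rewrite <- triangle_eq.
  eapply reval_comp2; [| apply reval_proj; reflexivity | apply reval_add_rec].
  eapply reval_comp1; [| apply reval_triangle_rec].
  eapply reval_comp2; [apply reval_proj; reflexivity | apply reval_proj; reflexivity |].
  apply reval_add_rec.
Qed.

Definition pair_rec (x y : recf) : recf := RComp npair_rec [x; y].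

Lemma reval_pair_rec x y args a b :
  reval x args a -> reval y args b -> reval (pair_rec x y) args (npair a b).
Proof. intros; eapply reval_comp2; eauto; apply reval_npair_rec. Qed.

Definition var_eq (v : nat) (c : Z) : formula := FEq (TVar v) (TConst c).

Definition var_eq_rec (vR cR : recf) : recf :=
  pair_rec (const_rec 0)
    (pair_rec (pair_rec (const_rec 0) vR) (pair_rec (const_rec 1) (RComp add_rec [cR; cR]))).

Lemma encZ_of_nat n : encZ (Z.of_nat n) = n + n.
Proof.
  unfold encZ; destruct (Z.leb_spec 0 (Z.of_nat n)); [|lia].
  rewrite Nat2Z.id; lia.
Qed.

Lemma reval_var_eq_rec vR cR args v n :
  reval vR args v -> reval cR args n ->
  reval (var_eq_rec vR cR) args (enc_formula (var_eq v (Z.of_nat n))).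
Proof.
  intros Hv Hn; simpl; rewrite encZ_of_nat.
  apply reval_pair_rec; [apply reval_const_rec|].
  apply reval_pair_rec; (apply reval_pair_rec; [apply reval_const_rec|]); auto.
  eapply reval_comp2; eauto; apply reval_add_rec.
Qed.

Definition and_rec (a b : recf) : recf := pair_rec (const_rec 6) (pair_rec a b).

Lemma reval_and_rec a b args f g :
  reval a args (enc_formula f) -> reval b args (enc_formula g) ->
  reval (and_rec a b) args (enc_formula (FAnd f g)).
Proof. intros; simpl; apply reval_pair_rec; [apply reval_const_rec | now apply reval_pair_rec]. Qed.

Fixpoint scratch_zero (k : nat) : formula :=
  match k with 0 => FTrue | S k' => FAnd (var_eq (4 + k') 0) (scratch_zero k') end.

Definition scratch_zero_rec : recf :=
  RPrimRec (pair_rec (const_rec 3) (const_rec 0))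
    (and_rec (var_eq_rec (RComp add_rec [const_rec 4; RProj 0]) (const_rec 0)) (RProj 1)).

Lemma reval_scratch_zero_rec k : reval scratch_zero_rec [k] (enc_formula (scratch_zero k)).
Proof.
  induction k as [|k IH].
  - apply ev_prim0, reval_pair_rec; apply reval_const_rec.
  - eapply ev_primS; [apply IH|]; simpl scratch_zero.
    apply reval_and_rec; [|apply reval_proj; reflexivity].
    apply (reval_var_eq_rec _ _ _ (4 + k) 0); [|apply reval_const_rec].
    eapply reval_comp2; [apply reval_const_rec | apply reval_proj; reflexivity | apply reval_add_rec].
Qed.

(* Register 1 is a flag, registers 2 and 3 hold the inputs [M] and [E] of the computation,
   and registers [4 .. M + 3] are scratch space. *)
Definition machine_init (M E : nat) : formula :=
  FAnd (var_eq 0 0) (FAnd (var_eq 1 0) (FAnd (var_eq 2 (Z.of_nat M))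
    (FAnd (var_eq 3 (Z.of_nat E)) (scratch_zero M)))).

Definition machine_init_rec : recf :=
  and_rec (var_eq_rec (const_rec 0) (const_rec 0))
    (and_rec (var_eq_rec (const_rec 1) (const_rec 0))
      (and_rec (var_eq_rec (const_rec 2) (RProj 0))
        (and_rec (var_eq_rec (const_rec 3) (RProj 1)) (RComp scratch_zero_rec [RProj 0])))).

Definition flag_unset : formula := FNot (var_eq 1 1).

Definition input_rec : recf :=
  pair_rec (RComp add_rec [RProj 0; const_rec 4])
    (pair_rec machine_init_rec
      (pair_rec (RProj 1) (pair_rec (const_rec 5) (var_eq_rec (const_rec 1) (const_rec 1))))).

Lemma reval_input_rec M TR :
  reval input_rec [M; enc_formula TR]
    (enc_input (mkTS (M + 4) (machine_init M (enc_formula TR)) TR) flag_unset).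
Proof.
  unfold enc_input, input_rec; simpl nv; simpl Init; simpl Defs.TR.
  apply reval_pair_rec.
  { eapply reval_comp2; [apply reval_proj; reflexivity | apply reval_const_rec | apply reval_add_rec]. }
  apply reval_pair_rec.
  - unfold machine_init_rec, machine_init.
    apply reval_and_rec; [apply (reval_var_eq_rec _ _ _ 0 0); apply reval_const_rec|].
    apply reval_and_rec; [apply (reval_var_eq_rec _ _ _ 1 0); apply reval_const_rec|].
    apply reval_and_rec;
      [apply reval_var_eq_rec; [apply reval_const_rec | apply reval_proj; reflexivity]|].
    apply reval_and_rec;
      [apply reval_var_eq_rec; [apply reval_const_rec | apply reval_proj; reflexivity]|].
    eapply reval_comp1; [apply reval_proj; reflexivity | apply reval_scratch_zero_rec].
  - apply reval_pair_rec; [apply reval_proj; reflexivity|].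
    unfold flag_unset; simpl enc_formula at 1.
    apply reval_pair_rec; [apply reval_const_rec|].
    apply (reval_var_eq_rec _ _ _ 1 1); apply reval_const_rec.
Qed.

(** * The diagonal machine *)

Definition max_regs (prog : list instr) : nat := fold_right (fun i m => Nat.max (max_reg i) m) 0 prog.

Lemma max_reg_le_max_regs prog ins : In ins prog -> max_reg ins <= max_regs prog.
Proof.
  induction prog as [|i prog IH]; simpl; [tauto|]; intros [<-|H]; [lia | specialize (IH H); lia].
Qed.

Lemma sat_scratch_zero rho k : sat rho (scratch_zero k) <-> forall j, j < k -> rho (4 + j) = 0%Z.
Proof.
  induction k as [|k IH]; simpl; [split; auto; intros; lia|].
  rewrite IH; split.
  - intros [H1 H2] j Hj; destruct (Nat.eq_dec j k); subst; auto; apply H2; lia.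
  - intros H; split; [apply H | intros; apply H]; lia.
Qed.

Lemma formula_over_scratch_zero k n : k + 4 <= n -> formula_over n (scratch_zero k).
Proof. induction k; simpl; auto; intros; split; [simpl; lia | apply IHk; lia]. Qed.

Section Diagonal.

Variable d : recf.

(* Register 3 initially holds the code of the machine's own transition relation, so [input_rec]
   rebuilds from registers 2 and 3 the code of the very input on which [d] is then run. *)
Definition diag_rec : recf := RComp d [input_rec].
Definition diag_code : list instr := compile diag_rec [2; 3] 4 5 0.
Definition diag_prog : list instr := diag_code ++ [ICopy 1 4 0].
Definition diag_width : nat := S (max_regs diag_prog).
Definition diag_vars : nat := diag_width + 4.
Definition diag_TR : formula := program_TR diag_vars diag_prog 0.
Definition diag_TS : TS := mkTS diag_vars (machine_init diag_width (enc_formula diag_TR)) diag_TR.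
Definition diag_start : state := fun v =>
  if v =? 2 then Z.of_nat diag_width
  else if v =? 3 then Z.of_nat (enc_formula diag_TR) else 0%Z.

End Diagonal.

Arguments diag_code : simpl never.
Arguments diag_prog : simpl never.
Arguments diag_width : simpl never.
Arguments diag_TR : simpl never.

Section DiagonalFacts.

Variable d : recf.

Lemma diag_regs_bound ins : In ins (diag_prog d) -> max_reg ins < diag_vars d.
Proof. intros H; apply max_reg_le_max_regs in H; unfold diag_vars, diag_width; lia. Qed.

Lemma diag_prog_length : length (diag_prog d) = length (diag_code d) + 1.
Proof. unfold diag_prog; now rewrite length_app. Qed.

Lemma diag_input_wf : input_wf (diag_TS d) flag_unset.
Proof.
  unfold input_wf, ts_wf, diag_TS, machine_init, flag_unset, var_eq; cbn [nv Init TR].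
  unfold diag_vars; cbn [formula_over term_over]; split; [split|].
  - do 4 (split; [split; [lia | exact I]|]); apply formula_over_scratch_zero; lia.
  - apply formula_over_program_TR; [unfold diag_vars; lia | apply diag_regs_bound].
  - lia.
Qed.

Lemma sat_diag_init rho :
  sat rho (Init (diag_TS d)) <-> forall v, v < diag_vars d -> rho v = diag_start d v.
Proof.
  unfold diag_TS, machine_init, var_eq, diag_start; cbn [Init sat teval].
  rewrite sat_scratch_zero; split.
  - intros [H0 [H1 [H2 [H3 H4]]]] v Hv.
    destruct v as [|[|[|[|v]]]]; cbn [Nat.eqb]; auto.
    apply (H4 v); unfold diag_vars in Hv; lia.
  - intros H; do 4 (split; [rewrite H by (unfold diag_vars; lia); reflexivity|]).
    intros j Hj; rewrite H by (unfold diag_vars; lia).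
    destruct (Nat.eqb_spec (4 + j) 2), (Nat.eqb_spec (4 + j) 3); lia || reflexivity.
Qed.

Lemma diag_run y :
  reval d [enc_input (diag_TS d) flag_unset] y ->
  exists sf, star (diag_prog d) (diag_start d) sf /\
    sf 0 = Z.of_nat (length (diag_prog d)) /\ sf 1 = Z.of_nat y.
Proof.
  intros Hd.
  assert (Hdiag : reval (diag_rec d) [diag_width d; enc_formula (diag_TR d)] y)
    by (eapply reval_comp1; [apply reval_input_rec | exact Hd]).
  destruct (compile_correct _ _ _ Hdiag (diag_prog d) [2; 3] 4 5 0 (diag_start d))
    as [t [St [Pt [Ot Ft]]]].
  - apply code_at_prefix.
  - repeat constructor; lia.
  - lia.
  - reflexivity.
  - unfold regs_hold, diag_start; cbn [map Nat.eqb]; reflexivity.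
  - fold (diag_code d) in Pt.
    assert (Hcopy : nth_error (diag_prog d) (length (diag_code d)) = Some (ICopy 1 4 0))
      by (unfold diag_prog; rewrite nth_error_app2, Nat.sub_diag by lia; reflexivity).
    exists (exec (ICopy 1 4 0) t); split; [|split].
    + eapply star_trans; [exact St | eapply star_exec1; [exact Hcopy | exact Pt]].
    + rewrite diag_prog_length; unfold exec; cbn [Nat.eqb]; lia.
    + unfold exec; cbn [Nat.eqb]; lia.
Qed.

(* Only the final instruction of [diag_prog] writes register 1. *)
Lemma diag_flag_unset t :
  star (diag_prog d) (diag_start d) t -> t 0 <> Z.of_nat (length (diag_prog d)) -> t 1 = 0%Z.
Proof.
  enough (forall a b, star (diag_prog d) a b ->
            (a 0 <> Z.of_nat (length (diag_prog d)) -> a 1 = 0%Z) ->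
            b 0 <> Z.of_nat (length (diag_prog d)) -> b 1 = 0%Z) by (intros; eauto).
  induction 1 as [|s u w [i [ins [Hi [Hins ->]]]] _ IH]; auto; intros Hs; apply IH.
  assert (Hi_lt : i < length (diag_prog d)) by (apply nth_error_Some; congruence).
  rewrite diag_prog_length in *.
  unfold diag_prog in Hins; destruct (Nat.eq_dec i (length (diag_code d))) as [->|Hne].
  - rewrite nth_error_app2, Nat.sub_diag in Hins by lia; injection Hins as <-.
    intros Hend; exfalso; apply Hend; unfold exec; cbn [Nat.eqb]; lia.
  - rewrite nth_error_app1 in Hins by lia; intros _.
    assert (Hw : writes_above 4 ins).
    { eapply Forall_forall; [apply (compile_writes_above 4 (diag_rec d) [2; 3] 4 5 0); lia|].
      eapply nth_error_In; eauto. }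
    specialize (Hs ltac:(lia)); destruct ins; simpl in Hw; simpl_exec.
Qed.

Lemma diag_nv_pos : 1 <= nv (diag_TS d).
Proof. cbn [nv diag_TS]; unfold diag_vars; lia. Qed.

Lemma diag_accepts_no_invariant :
  reval d [enc_input (diag_TS d) flag_unset] 1 -> ~ has_QFLIA_invariant (diag_TS d) flag_unset.
Proof.
  intros Hd [I Hinv]; destruct (diag_run 1 Hd) as [sf [Hrun [_ Hflag]]].
  assert (Hstart : sat (diag_start d) I)
    by (apply (proj1 (proj2 Hinv)), (proj2 (sat_diag_init _)); intros; reflexivity).
  assert (HI : sat sf I) by exact (inductive_invariant_star (diag_TS d) (diag_prog d)
    diag_nv_pos diag_regs_bound eq_refl flag_unset I (diag_start d) sf Hinv Hrun Hstart).
  apply (proj2 (proj2 (proj2 Hinv)) sf HI); cbn [sat teval var_eq]; now rewrite Hflag.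
Qed.

Lemma diag_rejects_invariant :
  reval d [enc_input (diag_TS d) flag_unset] 0 -> has_QFLIA_invariant (diag_TS d) flag_unset.
Proof.
  intros Hd; destruct (diag_run 0 Hd) as [sf [Hrun [Hend Hflag]]].
  apply (halting_run_invariant (diag_TS d) (diag_prog d) diag_nv_pos diag_regs_bound eq_refl
           flag_unset (diag_start d) sf); auto.
  - intros rho Hrho; exact (proj1 (sat_diag_init rho) Hrho).
  - now apply final_at_end.
  - cbn [nv diag_TS flag_unset var_eq formula_over term_over]; unfold diag_vars; lia.
  - intros t Ht; cbn [flag_unset var_eq sat teval].
    destruct (Z.eq_dec (t 0) (Z.of_nat (length (diag_prog d)))) as [Hend_t|Hrun_t].
    + assert (Htf : star (diag_prog d) t sf) by (eapply star_to_final; eauto using final_at_end).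
      inversion Htf as [|? u ? Hstep _]; subst; [rewrite Hflag; lia|].
      exfalso; eapply final_at_end; eauto.
    + rewrite diag_flag_unset by auto; lia.
Qed.

End DiagonalFacts.

Theorem mainTheorem1 : ~ exists f : recf, decides_invariant_existence f.
Proof.
  intros [d Hd].
  destruct (Hd (diag_TS d) flag_unset (diag_input_wf d)) as [Hyes Hno].
  assert (Hnone : ~ has_QFLIA_invariant (diag_TS d) flag_unset)
    by (intros Hinv; exact (diag_accepts_no_invariant d (Hyes Hinv) Hinv)).
  exact (Hnone (diag_rejects_invariant d (Hno Hnone))).
Qed.
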